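(* Let $k\in\mathbb N$ and $n\in\mathbb Z^+$, with $a_j$, $\Phi_m,\Psi_m$, $\Phi_n^{(k)},\Psi_n^{(k)}$ as in the context. Then $$2z^k\prod_{j=0}^{k-1}(1-|a_j|^2)\begin{pmatrix}\Phi_n^{(k)}&\Psi_n^{(k)}\\ \Phi_n^{(k)*}&-\Psi_n^{(k)*}\end{pmatrix}=\begin{pmatrix}\Phi_{n+k}&\Psi_{n+k}\\ \Phi_{n+k}^*&-\Psi_{n+k}^*\end{pmatrix}\begin{pmatrix}\Psi_k^*+\Psi_k&\Psi_k^*-\Psi_k\\ \Phi_k^*-\Phi_k&\Phi_k^*+\Phi_k\end{pmatrix}.$$
   Context: $\mathbb N=\{1,2,\dots\}$, $\mathbb Z^+=\mathbb N\cup\{0\}$. For a polynomial $p$ indexed by $m$, $p^*(z)=z^m\overline{p(1/\bar z)}$ (reversal with respect to degree $m$; e.g. $\Phi_n^{(k)*}$ is taken with respect to degree $n$). Let $\sigma$ be a positive Borel measure on $[0,2\pi)$ with infinite support; $\Phi_m$ the monic degree-$m$ polynomials orthogonal with respect to $\sigma$ on the unit circle; $a_m=-\overline{\Phi_{m+1}(0)}$, so $|a_m|<1$, $\Phi_0=1$, $\Phi_{m+1}=z\Phi_m-\overline{a_m}\Phi_m^*$; $\Psi_0=1$, $\Psi_{m+1}=z\Psi_m+\overline{a_m}\Psi_m^*$. The $k$th associated polynomials: $\Phi_0^{(k)}=\Psi_0^{(k)}=1$, $\Phi_{m+1}^{(k)}=z\Phi_m^{(k)}-\overline{a_{m+k}}\,\Phi_m^{(k)*}$,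 $\Psi_{m+1}^{(k)}=z\Psi_m^{(k)}+\overline{a_{m+k}}\,\Psi_m^{(k)*}$. *)

From HB Require Import structures.
From mathcomp Require Import all_boot all_order all_algebra.
From mathcomp Require Import reals.
From mathcomp Require Import complex.
Set Implicit Arguments. Unset Strict Implicit. Unset Printing Implicit Defensive.
Import Order.TTheory GRing.Theory Num.Theory.
Local Open Scope ring_scope.

(* p^* reversal with respect to degree m: p^*(z) = z^m conj(p(1/conj z)),
   i.e. the coefficient of z^i in p^* is the conjugate of the coefficient
   of z^(m-i) in p (0 <= i <= m). *)
Definition rev_poly (R : realType) (m : nat) (p : {poly R[i]}) : {poly R[i]} :=
  \poly_(i < m.+1) (p`_(m - i))^*.

Fixpoint Phi (R : realType) (a : nat -> R[i]) (m : nat) : {poly R[i]} :=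
  match m with
  | 0 => 1
  | m'.+1 => 'X * Phi a m' - ((a m')^*)%:P * rev_poly m' (Phi a m')
  end.

Fixpoint Psi (R : realType) (a : nat -> R[i]) (m : nat) : {poly R[i]} :=
  match m with
  | 0 => 1
  | m'.+1 => 'X * Psi a m' + ((a m')^*)%:P * rev_poly m' (Psi a m')
  end.

Fixpoint Phi_assoc (R : realType) (a : nat -> R[i]) (k m : nat) : {poly R[i]} :=
  match m with
  | 0 => 1
  | m'.+1 => 'X * Phi_assoc a k m' - ((a (m' + k)%N)^*)%:P * rev_poly m' (Phi_assoc a k m')
  end.

Fixpoint Psi_assoc (R : realType) (a : nat -> R[i]) (k m : nat) : {poly R[i]} :=
  match m with
  | 0 => 1
  | m'.+1 => 'X * Psi_assoc a k m' + ((a (m' + k)%N)^*)%:P * rev_poly m' (Psi_assoc a k m')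
  end.

Definition mx22 (T : Type) (x y z w : T) : 'M[T]_2 :=
  \matrix_(i < 2, j < 2)
    if i == ord0 then (if j == ord0 then x else y) else (if j == ord0 then z else w).

From HB Require Import structures.
From mathcomp Require Import all_boot all_order all_algebra.
From mathcomp Require Import reals complex.
From mathcomp Require Import ring zify.
Set Implicit Arguments. Unset Strict Implicit. Unset Printing Implicit Defensive.
Import Order.TTheory GRing.Theory Num.Theory.
Local Open Scope ring_scope.

(* The Szego recursion reads M_(m+1) = T(a_m) M_m for the matrix
   M_m = [Phi_m, Psi_m; Phi_m^*, -Psi_m^*] and the transfer matrix
   T(c) = [z, -conj c; -c z, 1]; the associated polynomials obey the same
   recursion with the shifted coefficients a_(j+k).  Hence both sides of the
   identity are propagated by the same transfer matrices from n to n+1, and it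
   suffices to check n = 0, where, for E the right-hand factor, it reduces
   to M_k E = -det(M_k) J with J = [1, 1; 1, -1].  Since
   det T(c) = z (1 - |c|^2) and det M_0 = -2, this is the
   Wronskian-type formula -det M_k = 2 z^k prod_(j<k) (1 - |a_j|^2). *)

Lemma mx22_mul (T : comNzRingType) (x y z w x' y' z' w' : T) :
  mx22 x y z w *m mx22 x' y' z' w' =
  mx22 (x * x' + y * z') (x * y' + y * w') (z * x' + w * z') (z * y' + w * w').
Proof.
apply/matrixP => i j; rewrite !mxE !big_ord_recr big_ord0 /= !mxE add0r.
by move: i j => [[|[|i]] Hi] [[|[|j]] Hj].
Qed.

Lemma mx22_scale (T : comNzRingType) (c x y z w : T) :
  c *: mx22 x y z w = mx22 (c * x) (c * y) (c * z) (c * w).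
Proof.
apply/matrixP => i j; rewrite !mxE.
by move: i j => [[|[|i]] Hi] [[|[|j]] Hj].
Qed.

Lemma det_mx22 (T : comNzRingType) (x y z w : T) :
  \det (mx22 x y z w) = x * w - y * z.
Proof.
rewrite (expand_det_row _ ord0) !big_ord_recr big_ord0 /= add0r.
by rewrite /cofactor !det_mx11 !mxE /= expr0 expr1 mul1r mulN1r mulrN.
Qed.

(* The right factor is -(adj M) J, so this is M (adj M) = det M. *)
Lemma mx22_mul_wronskian (T : comNzRingType) (p q p' q' : T) :
  mx22 p q p' (- q') *m mx22 (q' + q) (q' - q) (p' - p) (p' + p)
  = - \det (mx22 p q p' (- q')) *: mx22 1 1 1 (-1).
Proof. by rewrite mx22_mul det_mx22 mx22_scale; congr mx22; ring. Qed.

Section SzegoStep.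
Variable R : realType.
Implicit Types (p q : {poly R[i]}) (c : R[i]).

Lemma rev_polyD m p q : rev_poly m (p + q) = rev_poly m p + rev_poly m q.
Proof.
apply/polyP => i; rewrite coefD !coef_poly; case: ifP => _; last by rewrite addr0.
by rewrite coefD rmorphD.
Qed.

Lemma rev_polyN m p : rev_poly m (- p) = - rev_poly m p.
Proof.
apply/polyP => i; rewrite coefN !coef_poly; case: ifP => _; last by rewrite oppr0.
by rewrite coefN rmorphN.
Qed.

Lemma rev_polyCM m c p : rev_poly m (c%:P * p) = (c^*)%:P * rev_poly m p.
Proof.
apply/polyP => i; rewrite coefCM !coef_poly; case: ifP => _; last by rewrite mulr0.
by rewrite coefCM rmorphM.
Qed.

Lemma rev_polyXM m p : rev_poly m.+1 ('X * p) = rev_poly m p.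
Proof.
apply/polyP => i; rewrite !coef_poly coefXM.
case: (ltnP i m.+1) => him.
  have -> : (i < m.+2)%N by lia.
  have -> : (m.+1 - i == 0)%N = false by apply/eqP; lia.
  by have -> : (m.+1 - i).-1 = (m - i)%N by lia.
case: ifP => // _.
have -> : (m.+1 - i == 0)%N by apply/eqP; lia.
by rewrite rmorph0.
Qed.

Lemma rev_polyS_rev m p :
  (size p <= m.+1)%N -> rev_poly m.+1 (rev_poly m p) = 'X * p.
Proof.
move=> sp; apply/polyP => i; rewrite !coef_poly coefXM.
case: (ltnP i m.+2) => him.
  case: (i =P 0)%N => [->|i0]; first by rewrite subn0 ltnn rmorph0.
  have -> : (m.+1 - i < m.+1)%N by lia.
  by rewrite conjCK; have -> : (m - (m.+1 - i))%N = i.-1 by lia.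
have -> : (i == 0)%N = false by apply/eqP; lia.
by rewrite nth_default //; move: him sp; case: i => //= j; lia.
Qed.

Lemma rev_poly0_1 : rev_poly 0 (1 : {poly R[i]}) = 1.
Proof. by apply/polyP => -[|i]; rewrite coef_poly !coef1 //= conjC1. Qed.

Lemma size_szego_step m c p : (size p <= m.+1)%N ->
  (size ('X * p + c%:P * rev_poly m p)%R <= m.+2)%N.
Proof.
move=> sp; apply: leq_trans (size_polyD _ _) _; rewrite geq_max; apply/andP; split.
  by apply: leq_trans (size_polyMleq _ _) _; rewrite size_polyX; lia.
by rewrite mul_polyC; apply: leq_trans (size_scale_leq _ _) (leqW (size_poly _ _)).
Qed.

Definition szego_transfer c : 'M[{poly R[i]}]_2 :=
  mx22 'X (- (c^*)%:P) (- (c%:P * 'X)) 1.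

Lemma det_szego_transfer c :
  \det (szego_transfer c) = 'X * (1 - `|c| ^+ 2)%:P.
Proof. by rewrite det_mx22 normCK polyCB polyCM polyC1; ring. Qed.

Lemma szego_transfer_mul m c p q :
  (size p <= m.+1)%N -> (size q <= m.+1)%N ->
  let p' := 'X * p - (c^*)%:P * rev_poly m p in
  let q' := 'X * q + (c^*)%:P * rev_poly m q in
  mx22 p' q' (rev_poly m.+1 p') (- rev_poly m.+1 q')
  = szego_transfer c *m mx22 p q (rev_poly m p) (- rev_poly m q).
Proof.
move=> sp sq p' q'; rewrite /p' /q' mx22_mul !(rev_polyD, rev_polyN, rev_polyCM).
by rewrite !rev_polyXM !rev_polyS_rev // conjCK; congr mx22; ring.
Qed.

Variable a : nat -> R[i].

Lemma size_Phi m : (size (Phi a m) <= m.+1)%N.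
Proof.
elim: m => [|m IH] /=; first by rewrite size_poly1.
by rewrite -mulNr -polyCN; apply: size_szego_step.
Qed.

Lemma size_Psi m : (size (Psi a m) <= m.+1)%N.
Proof. by elim: m => [|m IH] /=; [rewrite size_poly1 | apply: size_szego_step]. Qed.

Lemma Phi_assoc_shift k m : Phi_assoc a k m = Phi (fun j => a (j + k)%N) m.
Proof. by elim: m => //= m ->. Qed.

Lemma Psi_assoc_shift k m : Psi_assoc a k m = Psi (fun j => a (j + k)%N) m.
Proof. by elim: m => //= m ->. Qed.

End SzegoStep.

Definition szego_mx (R : realType) (a : nat -> R[i]) (m : nat) :=
  mx22 (Phi a m) (Psi a m) (rev_poly m (Phi a m)) (- rev_poly m (Psi a m)).

Section SzegoMatrix.
Variable R : realType.
Implicit Types a b : nat -> R[i].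

Lemma szego_mx0 a : szego_mx a 0 = mx22 1 1 1 (-1).
Proof. by rewrite /szego_mx /= rev_poly0_1. Qed.

Lemma szego_mxS a m : szego_mx a m.+1 = szego_transfer (a m) *m szego_mx a m.
Proof. exact: szego_transfer_mul (size_Phi a m) (size_Psi a m). Qed.

Lemma det_szego_mx a m :
  \det (szego_mx a m) = - (2%:R * 'X^m * (\prod_(j < m) (1 - `|a j| ^+ 2))%:P).
Proof.
elim: m => [|m IH].
  by rewrite szego_mx0 det_mx22 big_ord0 expr0; ring.
rewrite szego_mxS det_mulmx det_szego_transfer IH big_ord_recr /= polyCM (exprS 'X).
ring.
Qed.

Lemma szego_mx_mul_wronskian a b k :
  szego_mx a k *m
    mx22 (rev_poly k (Psi a k) + Psi a k) (rev_poly k (Psi a k) - Psi a k)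
         (rev_poly k (Phi a k) - Phi a k) (rev_poly k (Phi a k) + Phi a k)
  = (2%:R * 'X^k * (\prod_(j < k) (1 - `|a j| ^+ 2))%:P) *: szego_mx b 0.
Proof. by rewrite mx22_mul_wronskian -/(szego_mx a k) det_szego_mx opprK szego_mx0. Qed.

Lemma szego_mx_addn a k n (E : 'M_2) c :
  szego_mx a k *m E = c *: szego_mx (fun j => a (j + k)%N) 0 ->
  szego_mx a (n + k) *m E = c *: szego_mx (fun j => a (j + k)%N) n.
Proof.
move=> base; elim: n => [|n IH]; first by rewrite add0n.
by rewrite addSn !szego_mxS -mulmxA IH scalemxAr.
Qed.

End SzegoMatrix.

Theorem theorem14 (R : realType) (a : nat -> R[i])
  (ha : forall m, `|a m| < 1) (k n : nat) (hk : (0 < k)%N) :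
  (2%:R * 'X^k * (\prod_(j < k) (1 - `|a j| ^+ 2))%:P) *:
    mx22 (Phi_assoc a k n) (Psi_assoc a k n)
         (rev_poly n (Phi_assoc a k n)) (- rev_poly n (Psi_assoc a k n))
  = mx22 (Phi a (n + k)) (Psi a (n + k))
         (rev_poly (n + k) (Phi a (n + k))) (- rev_poly (n + k) (Psi a (n + k)))
    *m mx22 (rev_poly k (Psi a k) + Psi a k) (rev_poly k (Psi a k) - Psi a k)
            (rev_poly k (Phi a k) - Phi a k) (rev_poly k (Phi a k) + Phi a k).
Proof.
rewrite Phi_assoc_shift Psi_assoc_shift.
exact/esym/(szego_mx_addn n (szego_mx_mul_wronskian a _ k)).
Qed.
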